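(* Let $G$ be a graph of order $n$ with stability number $\alpha$ (so $1\le\alpha\le n$). Then \[ F(G) \le f_{\mathsf T}(n,\alpha), \] with equality if and only if $G \simeq T_{n,\alpha}$.
   Context: All graphs are finite, simple and undirected; the stability number $\alpha(G)$ is the maximum size of a stable set. The Fibonacci index $F(G)$ of $G$ is the number of stable sets of $G$, including the empty set. For integers $1\le \alpha\le n$, the Turán graph $T_{n,\alpha}$ is the disjoint union of $\alpha$ cliques whose orders sum to $n$ and differ pairwise by at most one. Define $f_{\mathsf T}(n,\alpha)=F(T_{n,\alpha})=(\lceil n/\alpha\rceil+1)^p(\lfloor n/\alpha\rfloor+1)^{\alpha-p}$ with $p = n \bmod \alpha$. *)

From mathcomp Require Import all_boot.
Set Implicit Arguments. Unset Strict Implicit. Unset Printing Implicit Defensive.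

Definition simple_graph (T : finType) (e : rel T) : Prop :=
  symmetric e /\ irreflexive e.

Definition stable (T : finType) (e : rel T) (A : {set T}) : bool :=
  [forall x in A, forall y in A, ~~ e x y].

Definition alpha (T : finType) (e : rel T) : nat :=
  \max_(A : {set T} | stable e A) #|A|.

Definition fib_index (T : finType) (e : rel T) : nat :=
  #|[set A : {set T} | stable e A]|.

(* Turán graph T_{n,a} on vertex set 'I_n: disjoint union of a cliques, the
   residue classes modulo a (their sizes differ pairwise by at most one). *)
Definition turan_rel (n a : nat) : rel 'I_n :=
  fun i j => (i != j) && (i %% a == j %% a).

Definition iso_turan (T : finType) (e : rel T) (a : nat) : Prop :=
  exists f : T -> 'I_#|T|, bijective f /\
    forall x y, e x y = @turan_rel #|T| a (f x) (f y).

Definition fT (n a : nat) : nat :=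
  let p := n %% a in
  ((n + a.-1) %/ a + 1) ^ p * (n %/ a + 1) ^ (a - p).

From mathcomp Require Import all_boot.
From mathcomp Require Import zify.
Set Implicit Arguments. Unset Strict Implicit. Unset Printing Implicit Defensive.

(* We work with subgraphs induced on vertex sets V and write F(V) for their
   number of stable sets.  Deleting a vertex v gives F(V) = F(V - v) + F(V - N[v]),
   and fT satisfies the matching recursion fT(m+1, a) = fT(m, a) + fT(m - m/a, a-1);
   fT is nondecreasing in n, strictly increasing when a > 0.  If V has stability
   number at most a and |V| = m + 1, a greedy stable set shows that some vertex v
   has at least m/a neighbours; then V - v has stability at most a and V - N[v]
   at most a - 1, and induction on |V| gives F(V) <= fT(|V|, a).  In the equality
   case v has exactly m/a neighbours, and the partition of V - v into cliques
   sized like the residue classes modulo a (given by induction) extends to V.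
   Conversely such a clique partition has prod (size + 1) = fT stable sets. *)

(* Number of k < n in the residue class j modulo a: the size of the j-th
   clique of the Turán graph T_{n,a}. *)
Definition res_count (n a j : nat) : nat := count (fun k => k %% a == j) (iota 0 n).

Lemma res_countS n a j : res_count n.+1 a j = res_count n a j + (n %% a == j).
Proof. by rewrite /res_count -addn1 iotaD count_cat /= addn0. Qed.

Lemma divmodS m a : 0 < a ->
  if (m %% a).+1 == a then m.+1 %/ a = (m %/ a).+1 /\ m.+1 %% a = 0
  else m.+1 %/ a = m %/ a /\ m.+1 %% a = (m %% a).+1.
Proof.
move=> a_gt0; have E : m.+1 = m %/ a * a + (m %% a).+1 by rewrite addnS -divn_eq.
case: eqP => [ra|/eqP ra]; first by rewrite E ra -mulSnr mulnK // modnMl.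
have lt_ra : (m %% a).+1 < a by rewrite ltn_neqAle ra ltn_pmod.
by rewrite E divnMDl // modnMDl (divn_small lt_ra) (modn_small lt_ra) addn0.
Qed.

Lemma res_count_small n a j : 0 < a -> j < a -> res_count n a j = n %/ a + (j < n %% a).
Proof.
move=> a_gt0 lt_ja; elim: n => [|n IH]; first by rewrite /res_count div0n mod0n.
rewrite res_countS IH; have := divmodS n a_gt0; have := ltn_pmod n a_gt0.
by case: eqP => [ra|ra] lt [-> ->]; lia.
Qed.

Lemma res_count_card n a j : #|[set k : 'I_n | k %% a == j]| = res_count n a j.
Proof.
rewrite cardsE -sum1_card -(big_mkord (fun k => k %% a == j) (fun=> 1)).
by rewrite sum1_count /index_iota subn0.
Qed.

Lemma fT_divE q r a : r < a -> fT (q * a + r) a = (q + 2) ^ r * (q + 1) ^ (a - r).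
Proof.
move=> lt_ra; have a_gt0 : 0 < a by case: a lt_ra.
rewrite /fT modnMDl (modn_small lt_ra) divnMDl // (divn_small lt_ra) addn0.
case: (posnP r) => [->|r_gt0]; first by rewrite !expn0.
congr (_ ^ _ * _); rewrite -addnA (_ : r + a.-1 = a + r.-1); last by lia.
by rewrite addnA -mulSnr divnMDl // divn_small; lia.
Qed.

Lemma fTn0 n : fT n 0 = 1.
Proof. by rewrite /fT !divn0 modn0 sub0n expn0 muln1 exp1n. Qed.

Lemma fT0n a : fT 0 a = 1.
Proof. by rewrite /fT mod0n div0n add0n exp1n expn0. Qed.

Lemma fT_gt0 n a : 0 < fT n a.
Proof. by rewrite /fT muln_gt0 !expn_gt0 !addn1. Qed.

(* The recursion matching the deletion of a vertex of degree m/a from the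
   Turán graph T_{m+1,a}: what remains of the graph after deleting its closed
   neighbourhood is the Turán graph T_{m - m/a, a-1}. *)
Lemma fT_rec m a : 0 < a -> fT m.+1 a = fT m a + fT (m - m %/ a) a.-1.
Proof.
case: a => // a _ /=.
have := ltn_pmod m (ltn0Sn a); have Em := divn_eq m a.+1.
set q := m %/ a.+1 in Em *; set r := m %% a.+1 in Em *; move=> lt_r.
have -> : m - q = q * a + r by lia.
rewrite Em -addnS (fT_divE _ lt_r); case: (ltnP r a) => [lt_ra | le_ar].
- rewrite (fT_divE _ lt_ra) fT_divE //; have -> : a.+1 - r = (a - r).+1 by lia.
  by rewrite subSS !expnS; lia.
- have -> : r = a by lia.
  rewrite -mulSnr -[_ * a.+1]addn0 -mulSnr -[_ * a]addn0 fT_divE //.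
  have -> : fT (q.+1 * a + 0) a = (q + 2) ^ a.
    clearbody q; case: a {r Em lt_r le_ar} => [|a]; first by rewrite fTn0.
    by rewrite fT_divE // expn0 mul1n subn0 addn1 addn2.
  by rewrite subn0 subSnn expn0 mul1n expn1 expnS addn1 addn2; lia.
Qed.

Lemma fT_mono a : {homo fT^~ a : n m / n <= m}.
Proof.
apply: homo_leq => [//|n p k|n]; first exact: leq_trans.
by case: (posnP a) => [->|a_gt0]; rewrite ?fTn0 // fT_rec // leq_addr.
Qed.

Lemma fT_smono a : 0 < a -> {homo fT^~ a : n m / n < m}.
Proof.
move=> a_gt0; apply: homo_ltn => [n p k|n]; first exact: ltn_trans.
by rewrite fT_rec // -[X in X < _]addn0 ltn_add2l fT_gt0.
Qed.

(* fT counts the stable sets of T_{n,a}: choose at most one vertex per clique. *)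
Lemma fT_prod n a : 0 < a -> fT n a = \prod_(j < a) (res_count n a j + 1).
Proof.
move=> a_gt0; rewrite {1}(divn_eq n a) fT_divE ?ltn_pmod //.
have le_ra := ltnW (ltn_pmod n a_gt0); set q := n %/ a; set r := n %% a.
rewrite -(big_mkord xpredT (fun j => res_count n a j + 1)).
rewrite (big_cat_nat (leq0n r) le_ra) /=.
rewrite (@eq_big_nat _ _ _ 0 r _ (fun=> q + 2)) => [|j /andP [_ lt_jr]]; last first.
  by rewrite res_count_small ?(leq_trans lt_jr) // -/q; lia.
rewrite (@eq_big_nat _ _ _ r a _ (fun=> q + 1)) => [|j /andP [le_rj lt_ja]]; last first.
  by rewrite res_count_small // -/q -/r ltnNge le_rj addn0.
by rewrite !prod_nat_const_nat subn0.
Qed.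

Definition color_class (A : finType) (X : {set A}) (col : A -> nat) (i : nat) : {set A} :=
  [set x in X | col x == i].

Lemma card_color_classD1 (A : finType) (X : {set A}) col i x : x \in X ->
  #|color_class X col i| = (col x == i) + #|color_class (X :\ x) col i|.
Proof.
move=> xX; rewrite (cardsD1 x) !inE xX; congr (_ + _).
by apply: eq_card => y; rewrite !inE; case: (y == x).
Qed.

Section StableSets.
Variables (T : finType) (e : rel T).
Hypotheses (e_sym : symmetric e) (e_irr : irreflexive e).

Definition stable_in (V : {set T}) : {set {set T}} :=
  [set A : {set T} | (A \subset V) && stable e A].

Definition fib_in (V : {set T}) : nat := #|stable_in V|.

Definition alpha_le (V : {set T}) (a : nat) : Prop :=
  forall A : {set T}, A \subset V -> stable e A -> #|A| <= a.

Definition nbhd (v : T) : {set T} := [set y | e v y].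

Definition deg (V : {set T}) (v : T) : nat := #|(V :\ v) :&: nbhd v|.

Lemma stableP (A : {set T}) :
  reflect (forall x y, x \in A -> y \in A -> ~~ e x y) (stable e A).
Proof.
apply: (iffP idP) => [/forall_inP sA x y xA | sA]; first exact: (forall_inP (sA x xA)).
by apply/forall_inP => x xA; apply/forall_inP => y; apply: sA.
Qed.

Lemma stable0 : stable e set0.
Proof. by apply/stableP => x y; rewrite inE. Qed.

Lemma stable1 x : stable e [set x].
Proof. by apply/stableP => y z /set1P -> /set1P ->; rewrite e_irr. Qed.

Definition nonadj (V : {set T}) (v : T) : {set T} := (V :\ v) :\: nbhd v.

Lemma nonadj_sub (V : {set T}) v : nonadj V v \subset V :\ v.
Proof. exact: subsetDl. Qed.

Lemma notin_nonadj (V : {set T}) v : v \notin nonadj V v.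
Proof. by rewrite !inE eqxx andbF. Qed.

Lemma stable_nonadjU1 (V A : {set T}) v : v \in V -> A \subset nonadj V v ->
  stable e A -> (v |: A \subset V) && stable e (v |: A).
Proof.
move=> vV AW /stableP sA; have inA y : y \in A -> y \in V /\ ~~ e v y.
  by move/(subsetP AW); rewrite !inE => /and3P [nvy _ yV].
apply/andP; split.
  by apply/subsetP => y /setU1P [-> | /inA []].
apply/stableP => x y /setU1P [-> | xA] /setU1P [-> | yA].
- by rewrite e_irr.
- by have [] := inA y yA.
- by rewrite e_sym; have [] := inA x xA.
- exact: sA.
Qed.

Lemma stable_sub (A B : {set T}) : B \subset A -> stable e A -> stable e B.
Proof.
by move=> /subsetP BA /stableP sA; apply/stableP => x y /BA xA /BA; apply: sA.
Qed.

Lemma fib_in0 : fib_in set0 = 1.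
Proof.
rewrite /fib_in (_ : stable_in set0 = [set set0]) ?cards1 //.
by apply/setP => A; rewrite !inE subset0; case: eqP => // ->; rewrite stable0.
Qed.

(* The deletion recursion F(V) = F(V - v) + F(V - N[v]): a stable set either
   avoids v, or is v together with a stable set of non-neighbours of v. *)
Lemma fib_rec (V : {set T}) v : v \in V ->
  fib_in V = fib_in (V :\ v) + fib_in (nonadj V v).
Proof.
move=> vV; rewrite /fib_in -(cardsID [set A : {set T} | v \in A] (stable_in V)) addnC.
congr (_ + _).
  by apply: eq_card => A; rewrite !inE subsetD1; case: (v \in A); rewrite /= ?andbT ?andbF.
have notin_W (B : {set T}) : B \in stable_in (nonadj V v) -> v \notin B.
  by rewrite inE => /andP [/subsetP BW _]; apply: contra (notin_nonadj V v); apply: BW.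
rewrite -(@card_in_imset _ _ (fun B => v |: B) (stable_in (nonadj V v))); last first.
  move=> B1 B2 /notin_W vB1 /notin_W vB2 E.
  by rewrite -(setU1K vB1) E setU1K.
apply: eq_card => A; rewrite !inE; apply/idP/imsetP => [/andP [/andP [AV sA] vA] | [B]].
- exists (A :\ v); last by rewrite setD1K.
  rewrite inE (stable_sub (subD1set A v) sA) andbT; apply/subsetP => y.
  rewrite !inE => /andP [yv yA]; rewrite yv (subsetP AV y yA) /= andbT.
  by move/stableP: sA; apply.
- rewrite /stable_in inE => /andP [BW sB] ->; rewrite setU11 andbT.
  exact: stable_nonadjU1.
Qed.

Lemma alpha_le_sub (U V : {set T}) a : U \subset V -> alpha_le V a -> alpha_le U a.
Proof. by move=> UV aV A AU; apply: aV; apply: subset_trans UV. Qed.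

Lemma alpha_le_gt0 (V : {set T}) a : alpha_le V a -> 0 < #|V| -> 0 < a.
Proof.
move=> aV /card_gt0P [x xV].
by have := aV _ _ (stable1 x); rewrite sub1set cards1; apply.
Qed.

(* Adding v to a stable set of its non-neighbours shows that V - N[v] has
   stability number at most a - 1. *)
Lemma alpha_le_nonadj (V : {set T}) v a : v \in V -> alpha_le V a ->
  alpha_le (nonadj V v) a.-1.
Proof.
move=> vV aV A AW sA; have /andP [AV svA] := stable_nonadjU1 vV AW sA.
have vA : v \notin A by apply: contra (notin_nonadj V v); apply: (subsetP AW).
by have := aV _ AV svA; rewrite cardsU1 vA; lia.
Qed.

Lemma card_nonadj (V : {set T}) v : v \in V ->
  #|V| = (deg V v + #|nonadj V v|).+1.
Proof. by move=> vV; rewrite (cardsD1 v V) vV /deg /nonadj cardsID. Qed.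

Lemma deg_sub (U V : {set T}) v : U \subset V -> deg U v <= deg V v.
Proof. by move=> UV; apply/subset_leq_card/setSI/setSD. Qed.

Lemma greedy_stable (V : {set T}) D : {in V, forall x, deg V x <= D} ->
  exists2 A : {set T}, (A \subset V) && stable e A & #|V| <= #|A| * D.+1.
Proof.
elim: {V}_.+1 {-2}V (ltnSn #|V|) => // N IH V VN degV.
have [-> | [x xV]] := set_0Vmem V; first by exists set0; rewrite ?sub0set ?stable0 ?cards0.
have cV := card_nonadj xV; have W_sub := subset_trans (nonadj_sub V x) (subD1set V x).
have [|y yW|A' /andP [A'W sA'] bound] := IH (nonadj V x); first by lia.
  exact: leq_trans (deg_sub y W_sub) (degV y (subsetP W_sub y yW)).
have xA' : x \notin A' by apply: contra (notin_nonadj V x); apply: (subsetP A'W).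
exists (x |: A'); first exact: stable_nonadjU1.
by rewrite cardsU1 xA' cV; have := degV x xV; lia.
Qed.

(* If V has stability at most a and |V| = m + 1, some vertex has at least m/a
   neighbours in V: otherwise the greedy stable set would exceed a. *)
Lemma high_degree_vertex (V : {set T}) a : alpha_le V a -> 0 < #|V| ->
  exists2 v, v \in V & #|V|.-1 %/ a <= deg V v.
Proof.
move=> aV V_gt0; have [x xV] := card_gt0P V_gt0; set q := #|V|.-1 %/ a.
have [q0 | q_gt0] := posnP q; first by exists x; rewrite ?q0.
case: (pickP [pred v in V | q <= deg V v]) => [v /andP [vV hv] | low]; first by exists v.
have /greedy_stable [A /andP [AV sA] bound] : {in V, forall y, deg V y <= q.-1}.
  by move=> y yV; have := low y; rewrite /= yV /=; lia.
have := aV A AV sA; have := leq_divM #|V|.-1 a; rewrite -/q.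
by move: bound; rewrite (ltn_predK q_gt0); nia.
Qed.

Definition clique_partition (V : {set T}) (col : T -> nat) : Prop :=
  forall x y, x \in V -> y \in V -> x != y -> e x y = (col x == col y).

(* V induces a copy of T_{|V|,a}: a clique partition whose colour classes have
   the sizes of the residue classes modulo a of {0..|V|-1}. *)
Definition turan_partition (V : {set T}) (a : nat) (col : T -> nat) : Prop :=
  clique_partition V col /\ forall i, #|color_class V col i| = res_count #|V| a i.

Lemma clique_partition_sub (U V : {set T}) col : U \subset V ->
  clique_partition V col -> clique_partition U col.
Proof. by move=> /subsetP UV cpV x y /UV xV /UV; apply: cpV. Qed.

(* If W lies in a clique partition of V and has stability at most a - 1, then
   one of the colours 0..a-1 is missing from W: otherwise one vertex of each
   colour would form a stable set of size a. *)
Lemma missing_color (V W : {set T}) col a : clique_partition V col -> W \subset V ->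
  alpha_le W a.-1 -> 0 < a -> exists2 i, i < a & forall x, x \in W -> col x != i.
Proof.
move=> cpV WV aW a_gt0.
have [/existsP [i /forall_inP miss] | all_met] :=
  boolP [exists i : 'I_a, [forall x in W, col x != i]]; first by exists i.
have /fin_all_exists2 [rep repW col_rep] : forall i : 'I_a, exists2 x, x \in W & col x = i.
  move=> i; move: all_met; rewrite negb_exists => /forallP /(_ i) /forall_inPn [x xW].
  by move=> /negPn /eqP; exists x.
have rep_inj : injective rep.
  by move=> i j eq_ij; apply: ord_inj; rewrite -col_rep eq_ij col_rep.
have SW : rep @: setT \subset W by apply/subsetP => _ /imsetP [i _ ->].
have sS : stable e (rep @: setT).
  apply/stableP => _ _ /imsetP [i _ ->] /imsetP [j _ ->].
  have [-> | neq_ij] := eqVneq i j; first by rewrite e_irr.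
  by rewrite cpV ?(subsetP WV) ?(inj_eq rep_inj) // !col_rep.
by have := aW _ SW sS; rewrite card_imset // cardsT card_ord; lia.
Qed.

(* Extending a Turán partition of V - v by a vertex v whose neighbourhood in
   V - v is a smallest class i: v joins class i, and exchanging the labels i and
   r = |V - v| mod a restores the residue-class sizes for |V| vertices. *)
Lemma turan_extend (V : {set T}) v a col i : v \in V -> 0 < a -> i < a ->
  turan_partition (V :\ v) a col -> res_count #|V :\ v| a i = #|V :\ v| %/ a ->
  {in V :\ v, forall x, e v x = (col x == i)} -> exists col', turan_partition V a col'.
Proof.
move=> vV a_gt0 lt_ia [cp_col card_col] small_i nbhd_v.
set m := #|V :\ v| in card_col small_i; set r := m %% a.
have cV : #|V| = m.+1 by rewrite (cardsD1 v V) vV.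
have small_r : res_count m a r = m %/ a.
  by rewrite res_count_small ?ltn_pmod // ltnn addn0.
pose sw j := if j == i then r else if j == r then i else j.
have swK : involutive sw.
  move=> j; rewrite /sw; have [-> | ji] := eqVneq j i.
    by rewrite eqxx; have [-> | ri] := eqVneq r i; rewrite ?eqxx.
  by have [-> | jr] := eqVneq j r; rewrite ?eqxx // (negbTE ji) (negbTE jr).
pose c0 x := if x == v then i else col x.
have in_V1 x : x \in V -> x != v -> x \in V :\ v by rewrite !inE => -> ->.
exists (sw \o c0); split.
  move=> x y xV yV neq_xy /=; rewrite (inj_eq (can_inj swK)) /c0.
  have [xv | xv] := eqVneq x v; have [yv | yv] := eqVneq y v.
  - by rewrite xv yv eqxx in neq_xy.
  - by rewrite xv nbhd_v ?in_V1 // eq_sym.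
  - by rewrite yv e_sym nbhd_v ?in_V1.
  - exact: cp_col (in_V1 _ xV xv) (in_V1 _ yV yv) neq_xy.
move=> j; rewrite cV res_countS -/r.
have -> : color_class V (sw \o c0) j = color_class V c0 (sw j).
  by apply/setP => x; rewrite !inE /= (can2_eq swK swK).
rewrite (card_color_classD1 _ _ vV) /c0 eqxx.
have -> : #|color_class (V :\ v) c0 (sw j)| = res_count m a (sw j).
  by rewrite -card_col; apply: eq_card => x; rewrite !inE /c0; case: (x == v).
rewrite /sw; have [-> | ji] := eqVneq j i; first by rewrite small_i small_r addnC eq_sym.
have [-> | jr] := eqVneq j r; first by rewrite eqxx small_i small_r addnC.
by rewrite eq_sym (negbTE ji) addn0.
Qed.

(* Some class
   i avoids V - N[v]; being at least as large as N(v), it equals N(v). *)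
Lemma turan_step (V : {set T}) v a col : v \in V -> alpha_le V a ->
  deg V v = #|V :\ v| %/ a -> turan_partition (V :\ v) a col ->
  exists col', turan_partition V a col'.
Proof.
move=> vV aV deg_v [cp_col card_col]; set m := #|V :\ v| in card_col deg_v.
have a_gt0 : 0 < a by apply: alpha_le_gt0 aV _; apply/card_gt0P; exists v.
have [i lt_ia miss_i] := missing_color cp_col (nonadj_sub V v) (alpha_le_nonadj vV aV) a_gt0.
have class_sub : color_class (V :\ v) col i \subset (V :\ v) :&: nbhd v.
  apply/subsetP => x; rewrite !inE => /andP [/andP [xv xV] /eqP col_x].
  rewrite xv xV /=; apply: contraT => nvx.
  by have := miss_i x; rewrite !inE nvx xv xV col_x eqxx => /(_ isT).
have size_i : res_count m a i = m %/ a.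
  apply/eqP; rewrite eqn_leq -{1}card_col -deg_v subset_leq_card //=.
  by rewrite deg_v res_count_small // leq_addr.
have /eqP class_eq : color_class (V :\ v) col i == (V :\ v) :&: nbhd v.
  by rewrite eqEcard class_sub card_col size_i -deg_v leqnn.
apply: (turan_extend vV a_gt0 lt_ia (conj cp_col card_col) size_i) => x xV1.
by move/setP/(_ x): class_eq; move: xV1; rewrite !inE => /andP [-> ->] /= ->.
Qed.

Lemma fib_le_fT (V : {set T}) a : alpha_le V a -> fib_in V <= fT #|V| a /\
  (fib_in V = fT #|V| a -> exists col, turan_partition V a col).
Proof.
elim: {V}_.+1 {-2}V (ltnSn #|V|) a => // N IH V VN a aV.
have [/eqP | V_gt0] := posnP #|V|.
  rewrite cards_eq0 => /eqP ->; rewrite fib_in0 cards0 fT0n; split=> // _.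
  exists (fun=> 0); split=> [x y | i]; rewrite ?inE // cards0 /res_count /=.
  by apply/eqP; rewrite cards_eq0; apply/eqP/setP => x; rewrite !inE.
have [v vV deg_v] := high_degree_vertex aV V_gt0.
set m := #|V|.-1 in deg_v; set d := deg V v in deg_v.
have cV : #|V| = (d + #|nonadj V v|).+1 := card_nonadj vV.
have cV1 : #|V :\ v| = m by rewrite /m (cardsD1 v V) vV.
have [|le1 eq1] := IH (V :\ v) _ a (alpha_le_sub (subD1set V v) aV); first by lia.
have [|le2 _] := IH (nonadj V v) _ a.-1 (alpha_le_nonadj vV aV); first by lia.
have cW : #|nonadj V v| = m - d by rewrite /m cV; lia.
rewrite cV1 in le1 eq1; rewrite cW in le2.
have mono : fT (m - d) a.-1 <= fT (m - m %/ a) a.-1 by apply/fT_mono/leq_sub2l.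
have a_gt0 := alpha_le_gt0 aV V_gt0.
rewrite (fib_rec vV) -(prednK V_gt0) fT_rec // -/m.
split=> [|fib_eq]; first exact: leq_add le1 (leq_trans le2 mono).
have [eq_V1 eq_W] : fib_in (V :\ v) = fT m a /\ fib_in (nonadj V v) = fT (m - m %/ a) a.-1.
  by move: fib_eq le1 (leq_trans le2 mono); lia.
have d_eq : d = m %/ a.
  apply/eqP; rewrite eqn_leq deg_v andbT leqNgt; apply/negP => lt_d.
  have [a1 | a1] := posnP a.-1; first by move: lt_d; rewrite (_ : a = 1) ?divn1; lia.
  by have := fT_smono a1 (_ : m - d < m - m %/ a); lia.
have [col tp] := eq1 eq_V1.
by apply: turan_step vV aV _ tp; rewrite cV1 -d_eq.
Qed.

Lemma color_class_nonadj (V : {set T}) col v j : clique_partition V col -> v \in V ->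
  color_class (nonadj V v) col j = if col v == j then set0 else color_class (V :\ v) col j.
Proof.
move=> cpV vV; apply/setP => x; rewrite !inE; have [-> | xv] := eqVneq x v.
  by rewrite ?eqxx !andbF; case: ifP; rewrite ?inE ?eqxx ?andbF.
case xV: (x \in V); rewrite ?andbF /=; last by case: ifP; rewrite ?inE ?xV ?andbF.
rewrite cpV 1?eq_sym // andbT.
have [<- | ne_j] := eqVneq (col v) j; rewrite !inE ?xv ?xV /=; first by case: eqP.
by have [-> | _] := eqVneq (col x) j; rewrite ?andbF // eq_sym ne_j.
Qed.

(* A clique partition with colours below a has prod (class size + 1) stable
   sets: a stable set picks at most one vertex from each class. *)
Lemma fib_clique_partition (V : {set T}) a col : clique_partition V col ->
  {in V, forall x, col x < a} -> fib_in V = \prod_(i < a) (#|color_class V col i| + 1).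
Proof.
elim: {V}_.+1 {-2}V (ltnSn #|V|) => // N IH V VN cpV col_lt.
have [-> | [v vV]] := set_0Vmem V.
  rewrite fib_in0 big1 // => i _; rewrite (_ : color_class _ _ _ = set0) ?cards0 //.
  by apply/setP => x; rewrite !inE.
have V1_sub := subD1set V v; set V1 := V :\ v.
have IH' (U : {set T}) : U \subset V1 -> fib_in U = \prod_(i < a) (#|color_class U col i| + 1).
  move=> UV1; have UV := subset_trans UV1 V1_sub; have := subset_leq_card UV1.
  move: VN; rewrite (cardsD1 v V) vV -/V1 => VN cU; apply: IH; first by lia.
    exact: clique_partition_sub UV cpV.
  by move=> x /(subsetP UV); apply: col_lt.
rewrite (fib_rec vV) (IH' _ (subxx _)) (IH' _ (nonadj_sub V v)).
pose r : 'I_a := Ordinal (col_lt v vV).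
have nonadj_class := color_class_nonadj _ cpV vV.
have prod_split (F : 'I_a -> nat) :
    \prod_(i < a) F i = F r * \prod_(i < a | i != r) F i by rewrite (bigD1 r).
have col_v_neq (i : 'I_a) : i != r -> (col v == i) = false by rewrite eq_sym => /negbTE.
have prod_nonadj : \prod_(i < a | i != r) (#|color_class (nonadj V v) col i| + 1) =
    \prod_(i < a | i != r) (#|color_class V1 col i| + 1).
  by apply: eq_bigr => i /col_v_neq; rewrite nonadj_class -/V1 => ->.
have prod_V : \prod_(i < a | i != r) (#|color_class V col i| + 1) =
    \prod_(i < a | i != r) (#|color_class V1 col i| + 1).
  by apply: eq_bigr => i /col_v_neq; rewrite (card_color_classD1 _ _ vV) => ->.
rewrite !prod_split /= prod_nonadj prod_V (card_color_classD1 _ _ vV) nonadj_class eqxx.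
by rewrite cards0 -/V1 add0n mul1n -mulSnr add1n !addn1.
Qed.

End StableSets.

(* Two sets with equally large colour classes: X injects into Y preserving
   colours (b0 is only a default value outside X). *)
Lemma color_matching (A B : finType) (g : A -> nat) (h : B -> nat) (b0 : B)
    (X : {set A}) (Y : {set B}) :
  (forall j, #|color_class X g j| = #|color_class Y h j|) ->
  exists f : A -> B, {in X &, injective f} /\ {in X, forall x, f x \in Y /\ h (f x) = g x}.
Proof.
elim: {X}_.+1 {-2}X (ltnSn #|X|) Y => // N IH X XN Y same.
have [-> | [x xX]] := set_0Vmem X; first by exists (fun=> b0); split=> ?; rewrite inE.
have /card_gt0P [y] : 0 < #|color_class Y h (g x)|.
  by rewrite -same; apply/card_gt0P; exists x; rewrite !inE xX eqxx.
rewrite !inE => /andP [yY /eqP hy].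
have [|j|f [f_inj f_map]] := IH (X :\ x) _ (Y :\ y).
- by move: XN; rewrite (cardsD1 x X) xX.
- apply/eqP; have := same j; rewrite (card_color_classD1 _ _ xX) (card_color_classD1 _ _ yY) hy.
  by move/eqP; rewrite eqn_add2l.
have in_X1 z : z \in X -> z != x -> z \in X :\ x by rewrite !inE => -> ->.
have f_Y1 z : z \in X -> z != x -> f z \in Y :\ y by move=> zX zx; case: (f_map z (in_X1 z zX zx)).
exists (fun z => if z == x then y else f z); split.
  move=> z1 z2 z1X z2X /=.
  have [-> | z1x] := eqVneq z1 x; have [-> | z2x] := eqVneq z2 x => // eq_f.
  - by have := f_Y1 z2 z2X z2x; rewrite -eq_f !inE eqxx.
  - by have := f_Y1 z1 z1X z1x; rewrite eq_f !inE eqxx.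
  - exact: f_inj (in_X1 z1 z1X z1x) (in_X1 z2 z2X z2x) eq_f.
move=> z zX /=; have [-> | zx] := eqVneq z x; first by rewrite yY hy.
by have [] := f_map z (in_X1 z zX zx); rewrite !inE => /andP [].
Qed.

(* A Turán partition of the whole vertex set yields an isomorphism onto
   T_{n,a}, matching each clique with a residue class modulo a. *)
Lemma turan_partition_iso (T : finType) (e : rel T) a col : irreflexive e -> 0 < #|T| ->
  turan_partition e setT a col -> iso_turan e a.
Proof.
move=> e_irr T_gt0 [cp card_col].
have same j : #|color_class setT col j| = #|color_class setT (fun k : 'I_#|T| => k %% a) j|.
  by rewrite card_col cardsT -res_count_card; apply: eq_card => k; rewrite !inE.
have [f [f_inj f_map]] := color_matching (Ordinal T_gt0) same.
have {}f_inj : injective f by move=> x y; apply: f_inj; rewrite inE.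
exists f; split; first by apply: inj_card_bij => //; rewrite card_ord.
move=> x y; have [_ col_x] := f_map x (in_setT x); have [_ col_y] := f_map y (in_setT y).
rewrite /turan_rel (inj_eq f_inj) col_x col_y; have [-> | xy] := eqVneq x y.
  by rewrite e_irr.
by rewrite cp ?in_setT.
Qed.

Lemma iso_turan_fib (T : finType) (e : rel T) a : symmetric e -> irreflexive e -> 0 < a ->
  iso_turan e a -> fib_in e setT = fT #|T| a.
Proof.
move=> e_sym e_irr a_gt0 [f [f_bij f_edge]]; have f_inj := bij_inj f_bij.
rewrite (@fib_clique_partition _ _ e_sym e_irr _ a (fun x => f x %% a)); first last.
- by move=> x _; rewrite ltn_pmod.
- by move=> x y _ _ xy; rewrite f_edge /turan_rel (inj_eq f_inj) xy.
rewrite fT_prod //; apply: eq_bigr => i _; congr (_ + 1).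
rewrite -res_count_card -(card_imset _ f_inj); apply: eq_card => k; rewrite !inE.
case: f_bij => g fK gK; apply/imsetP/idP => [[x] | k_i]; first by rewrite !inE => ? ->.
by exists (g k); rewrite ?inE gK.
Qed.

Theorem mainTheorem5 (T : finType) (e : rel T) :
  simple_graph e -> 0 < #|T| ->
  fib_index e <= fT #|T| (alpha e) /\
  (fib_index e = fT #|T| (alpha e) <-> iso_turan e (alpha e)).
Proof.
move=> [e_sym e_irr] T_gt0.
have alphaT : alpha_le e setT (alpha e).
  by move=> A _ sA; apply: (leq_bigmax_cond (F := fun A : {set T} => #|A|)).
have a_gt0 : 0 < alpha e by apply: (alpha_le_gt0 e_irr alphaT); rewrite cardsT.
have fibT : fib_index e = fib_in e setT by apply: eq_card => A; rewrite !inE subsetT.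
have [le eq_turan] := fib_le_fT e_sym e_irr alphaT.
rewrite cardsT -fibT in le eq_turan; split=> //; split=> [/eq_turan [col] | iso].
  exact: turan_partition_iso.
by rewrite fibT; apply: iso_turan_fib.
Qed.
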